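(* Let $q_{n,k}$ be the number of induced subgraphs of the matchable Lucas cube $\Omega_n$ isomorphic to the $k$-dimensional hypercube $Q_k$. Then: (1) for $n\ge2$, $q_{n,0}=L_n$ and $q_{n,1}=nF_{n-1}$; (2) for $n\ge4$, $q_{n,2}=\frac15 nF_{n-3}+\frac1{10}(n-3)nL_{n-2}$; (3) for $n\ge6$, $q_{n,3}=\frac{2}{25}nF_{n-5}+\frac1{25}(n-5)nL_{n-4}+\frac1{30}(n^2-9n+20)nF_{n-3}$.
   Context: For $n\ge1$ let $\Xi_n$ be the poset on $\{x_1,\dots,x_n\}$ whose cover relations are exactly: $x_2\prec x_1$, $x_3\prec x_2$, and for $3\le i\le n-1$, $x_i\prec x_{i+1}$ if $i$ is odd and $x_{i+1}\prec x_i$ if $i$ is even (so $x_1>x_2>x_3<x_4>x_5<\cdots$). A filter of a poset is an up-closed subset. The matchable Lucas cube $\Omega_n$ is the graph whose vertices are the filters of $\Xi_n$, two filters being adjacent iff one is obtained from the other by deleting a single element (the undirected Hasse diagram of the filter lattice); $\Omega_0$ is the one-vertex graph. $L_n$ are the Lucas numbers ($L_0=2$, $L_1=1$, $L_n=L_{n-1}+L_{n-2}$) and $F_n$ the Fibonacci numbers ($F_0=0$, $F_1=1$, $F_n=F_{n-1}+F_{n-2}$). *)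

From mathcomp Require Import all_boot all_order all_algebra.
Set Implicit Arguments. Unset Strict Implicit. Unset Printing Implicit Defensive.

Fixpoint fib (n : nat) : nat :=
  match n with 0 => 0 | 1 => 1 | (m.+1 as p).+1 => fib p + fib m end.

Fixpoint lucas (n : nat) : nat :=
  match n with 0 => 2 | 1 => 1 | (m.+1 as p).+1 => lucas p + lucas m end.

(* The element i : 'I_n represents x_{i+1}.
   xi_cov n i j  <=>  x_{i+1} ≺ x_{j+1} is a cover relation of Xi_n
   (written with 1-based indices a = i+1, b = j+1). *)
Definition xi_cov (n : nat) (i j : 'I_n) : bool :=
  let a := i.+1 in let b := j.+1 in
  [|| (a == 2) && (b == 1),
      (a == 3) && (b == 2),
      [&& 3 <= a, a <= n - 1, odd a & b == a.+1]
    | [&& 3 <= b, b <= n - 1, ~~ odd b & a == b.+1] ].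

Definition xi_le (n : nat) (i j : 'I_n) : bool := connect (@xi_cov n) i j.

Definition is_filter (n : nat) (F : {set 'I_n}) : bool :=
  [forall i, forall j, (i \in F) && xi_le i j ==> (j \in F)].

Definition filters (n : nat) : {set {set 'I_n}} := [set F | is_filter F].

Definition del1 (T : finType) (A B : {set T}) : bool :=
  [exists x, (x \in A) && (B == A :\ x)].
Definition adj (T : finType) (A B : {set T}) : bool := del1 A B || del1 B A.

(* Vertices of Omega_n are filters of Xi_n, edges given by adj.
   Vertices of the hypercube Q_k are subsets of 'I_k, edges given by adj
   (symmetric difference a singleton). *)

Definition induced_Qk (n k : nat) (S : {set {set 'I_n}}) : bool :=
  (S \subset filters n) &&
  [exists f : {ffun {set 'I_k} -> {set 'I_n}},
     [&& injectiveb f, [set f u | u : {set 'I_k}] == S &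
         [forall u, forall v, adj (f u) (f v) == adj u v]]].

Arguments induced_Qk : clear implicits.

Definition q (n k : nat) : nat := #|[set S | induced_Qk n k S]|.

(* An injective map from the k-cube into a Hasse diagram of sets that preserves
   adjacency has the form u |-> A (+) c(u) with c injective ((+) the symmetric
   difference).  Hence an induced Q_k in a family of sets is an interval
   [B, B u C] with B, C disjoint and |C| = k lying in the family, and the
   interval determines (B, C).  For filters of the fence Xi_n such an interval
   consists of filters iff every cover x < y with x in B u C has y in B.
   Labelling each x_i with 2, 1 or 0 according as it lies in B, in C or in
   neither turns this into a condition on consecutive letters of a word over
   {0, 1, 2}; since descents and ascents of the fence alternate from x_2 on,
   splitting valid words by their last two letters gives
   q_{n+2,k} = q_{n+1,k} + q_{n,k} + q_{n,k-1} for n >= 2, and the closed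
   forms follow by induction. *)

From mathcomp Require Import all_boot all_order all_algebra zify ring.
Set Implicit Arguments. Unset Strict Implicit. Unset Printing Implicit Defensive.
Import GRing.Theory.

Section SymmetricDifference.
Variable T : finType.
Implicit Types (A B X Y : {set T}) (x : T).

Definition symdiff A B := (A :\: B) :|: (B :\: A).

Lemma in_symdiff x A B : (x \in symdiff A B) = (x \in A) (+) (x \in B).
Proof. by rewrite !inE; case: (x \in A); case: (x \in B). Qed.

Lemma symdiffC A B : symdiff A B = symdiff B A.
Proof. by apply/setP=> x; rewrite !in_symdiff addbC. Qed.

Lemma symdiffKl A B : symdiff A (symdiff A B) = B.
Proof. by apply/setP=> x; rewrite !in_symdiff addKb. Qed.

Lemma symdiffss A : symdiff A A = set0.
Proof. by apply/setP=> x; rewrite in_symdiff addbb inE. Qed.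

Lemma symdiff0s A : symdiff set0 A = A.
Proof. by apply/setP=> x; rewrite in_symdiff inE. Qed.

Lemma symdiff_inj A : injective (symdiff A).
Proof. by move=> X Y E; rewrite -(symdiffKl A X) E symdiffKl. Qed.

Lemma symdiff_set1_in x A : x \in A -> symdiff A [set x] = A :\ x.
Proof.
move=> xA; apply/setP=> y; rewrite in_symdiff !inE.
by case: eqVneq => [->|]; rewrite ?xA ?addbF.
Qed.

Lemma symdiff_set1_notin x A : x \notin A -> symdiff A [set x] = x |: A.
Proof.
move=> xA; apply/setP=> y; rewrite in_symdiff !inE.
by case: eqVneq => [->|]; rewrite ?(negbTE xA) ?addbF.
Qed.

Lemma symdiffUl B X Y : [disjoint B & X] -> [disjoint B & Y] ->
  symdiff (B :|: X) (B :|: Y) = symdiff X Y.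
Proof.
move=> dX dY; apply/setP=> x; rewrite !in_symdiff !inE.
by case xB: (x \in B) => //=; rewrite (disjointFr dX xB) (disjointFr dY xB).
Qed.

Lemma adjE A B : adj A B = (#|symdiff A B| == 1).
Proof.
apply/idP/cards1P => [|[x sAB]].
  case/orP=> /existsP[x /andP[xA /eqP->]]; exists x;
  by rewrite -symdiff_set1_in // ?symdiffKl // symdiffC symdiffKl.
have: x \in symdiff A B by rewrite sAB set11.
rewrite /adj /del1 in_symdiff; case xA: (x \in A) => /= xB.
  apply/orP; left; apply/existsP; exists x.
  by rewrite xA -symdiff_set1_in // -sAB symdiffKl eqxx.
apply/orP; right; apply/existsP; exists x.
by rewrite xB -symdiff_set1_in // -sAB (symdiffC A) symdiffKl eqxx.
Qed.

Lemma adj_symdiffl A X Y : adj (symdiff A X) (symdiff A Y) = adj X Y.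
Proof.
rewrite !adjE; suff -> : symdiff (symdiff A X) (symdiff A Y) = symdiff X Y by [].
apply/setP=> x; rewrite !in_symdiff.
by case: (x \in A); case: (x \in X); case: (x \in Y).
Qed.

Lemma adj_setU1 x A : x \notin A -> adj A (x |: A).
Proof. by move=> xA; rewrite adjE -symdiff_set1_notin // symdiffKl cards1. Qed.

Lemma adj_setU1_symdiff A a b x : a != b -> a \notin A -> b \notin A -> x != b ->
  adj (a |: A) (symdiff (b |: A) [set x]) -> x = a.
Proof.
(* Otherwise both a and b lie in the singleton symmetric difference. *)
move=> ab aA bA xb; rewrite adjE => /cards1P[y E].
apply/eqP; apply: contraNT (ab) => xa.
have in_y z : z \in symdiff (a |: A) (symdiff (b |: A) [set x]) -> z = y.
  by rewrite E => /set1P.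
have ya : a = y.
  apply: in_y; rewrite !in_symdiff !in_setU1 in_set1 eqxx (negbTE ab).
  by rewrite (negbTE aA) eq_sym (negbTE xa).
have yb : b = y.
  apply: in_y; rewrite !in_symdiff !in_setU1 in_set1 eqxx eq_sym (negbTE ab).
  by rewrite (negbTE bA) eq_sym (negbTE xb).
by rewrite ya yb.
Qed.

End SymmetricDifference.

Lemma symdiff_imset (T U : finType) (e : U -> T) (u v : {set U}) : injective e ->
  symdiff (e @: u) (e @: v) = e @: symdiff u v.
Proof.
move=> e_inj; apply/setP=> x; rewrite in_symdiff.
have [/imsetP[y _ ->]|xe] := boolP (x \in e @: setT).
  by rewrite !mem_imset // in_symdiff.
have nmem (w : {set U}) : x \in e @: w = false.
  by apply: contraNF xe => /imsetP[y _ ->]; exact: imset_f.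
by rewrite !nmem.
Qed.

Section PointedCubeEmbedding.
Variables (T : finType) (k : nat) (g : {set 'I_k} -> {set T}).
Hypotheses (g_inj : injective g) (g_adj : forall u v, adj u v -> adj (g u) (g v)).
Hypothesis g0 : g set0 = set0.
Implicit Types (u : {set 'I_k}) (i : 'I_k).

Let g_setU1 u i : i \notin u -> exists x, g (i |: u) = symdiff (g u) [set x].
Proof.
by move/adj_setU1/g_adj; rewrite adjE => /cards1P[x Ex]; exists x; rewrite -Ex symdiffKl.
Qed.

Let g_set1_ex i : exists x, g [set i] == [set x].
Proof.
have [x Ex] := g_setU1 (negbT (in_set0 i)); exists x.
by rewrite -[[set i]]setU0 Ex g0 symdiff0s.
Qed.

Let gen i := xchoose (g_set1_ex i).

Let g_set1 i : g [set i] = [set gen i].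
Proof. exact/eqP/(xchooseP (g_set1_ex i)). Qed.

Let gen_inj : injective gen.
Proof. by move=> i j E; apply/set1_inj/g_inj; rewrite !g_set1 E. Qed.

(* g u is g w plus or minus one point x, for u = i |: w; adjacency of g u to
   g (i |: w') with w = j |: w' forces x = gen i. *)
Let g_imset u : g u = gen @: u.
Proof.
have [m] := ubnP #|u|; elim: m u => // m IH u lt_u.
have [->|[i iu]] := set_0Vmem u; first by rewrite g0 imset0.
have {iu}[w iw Eu] : exists2 w : {set 'I_k}, i \notin w & u = i |: w.
  by exists (u :\ i); rewrite ?setD11 ?setD1K.
have lt_w : #|w| < m by move: lt_u; rewrite Eu cardsU1 iw.
have [w0|[j jw]] := set_0Vmem w; first by rewrite Eu w0 setU0 imset_set1 g_set1.
have {jw}[w' jw' Ew] : exists2 w' : {set 'I_k}, j \notin w' & w = j |: w'.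
  by exists (w :\ j); rewrite ?setD11 ?setD1K.
have ij : i != j by apply: contraNneq iw => ->; rewrite Ew setU11.
have iw' : i \notin w' by apply: contraNN iw; rewrite Ew; exact: setU1r.
have gw' : g w' = gen @: w'.
  by apply: IH; apply: leq_ltn_trans lt_w; rewrite Ew cardsU1 leq_addl.
have giw' : g (i |: w') = gen @: (i |: w').
  by apply: IH; move: lt_w; rewrite Ew !cardsU1 iw' jw'.
have [x Ex] := g_setU1 iw; rewrite -Eu (IH w lt_w) Ew imsetU1 in Ex.
have xj : x != gen j.
  apply: contraNneq iw' => xE; suff <- : u = w' by rewrite Eu setU11.
  by apply: g_inj; rewrite Ex xE symdiff_set1_in ?setU11 // setU1K ?mem_imset // gw'.
have xi : x = gen i.
  apply: (@adj_setU1_symdiff _ (gen @: w') _ (gen j)); rewrite ?(inj_eq gen_inj) ?mem_imset //.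
  rewrite -imsetU1 -giw' -Ex; apply: g_adj.
  by rewrite Eu Ew (setUCA [set i]) adj_setU1 // in_setU1 negb_or eq_sym ij.
rewrite Ex xi symdiff_set1_notin ?Eu ?Ew ?imsetU1 //.
by rewrite in_setU1 negb_or (inj_eq gen_inj) ij mem_imset.
Qed.

Lemma pointed_cube_embedding : exists2 c : 'I_k -> T, injective c & forall u, g u = c @: u.
Proof. by exists gen. Qed.

End PointedCubeEmbedding.

Lemma cube_embedding (T : finType) k (f : {set 'I_k} -> {set T}) :
  injective f -> (forall u v, adj u v -> adj (f u) (f v)) ->
  exists2 c : 'I_k -> T, injective c & forall u, f u = symdiff (f set0) (c @: u).
Proof.
move=> f_inj f_adj; pose g u := symdiff (f set0) (f u).
have g_inj : injective g by move=> u v /symdiff_inj/f_inj.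
have g_adj u v : adj u v -> adj (g u) (g v) by rewrite adj_symdiffl; exact: f_adj.
have [c c_inj gE] := pointed_cube_embedding g_inj g_adj (symdiffss _).
by exists c => // u; rewrite -gE symdiffKl.
Qed.

Section Subcubes.
Variable T : finType.
Implicit Types (B C W X : {set T}) (Fam : {set {set T}}).

Definition subcube B C : {set {set T}} := [set B :|: W | W in powerset C].

Lemma mem_subcube B C X : (X \in subcube B C) = (B \subset X) && (X \subset B :|: C).
Proof.
apply/imsetP/andP => [[W]|[BX XBC]]; first by rewrite inE => WC ->; rewrite subsetUl setUS.
exists (X :&: C); first by rewrite inE subsetIr.
by rewrite -{1}(setIidPr XBC) setIUl (setIidPl BX) setIC.
Qed.

Lemma setUKI_disjoint B C W : [disjoint B & C] -> W \subset C -> (B :|: W) :&: C = W.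
Proof. by move=> dBC WC; rewrite setIUl (disjoint_setI0 dBC) set0U (setIidPl WC). Qed.

Lemma card_subcube B C : [disjoint B & C] -> #|subcube B C| = 2 ^ #|C|.
Proof.
move=> dBC; rewrite card_in_imset ?card_powerset // => W W'; rewrite !inE => WC W'C E.
by rewrite -(setUKI_disjoint dBC WC) E setUKI_disjoint.
Qed.

Lemma subcube_inj B C B' C' : [disjoint B & C] -> [disjoint B' & C'] ->
  subcube B C = subcube B' C' -> (B, C) = (B', C').
Proof.
have bounds B1 C1 B2 C2 : subcube B1 C1 = subcube B2 C2 ->
    (B2 \subset B1) && (B1 :|: C1 \subset B2 :|: C2).
  move=> E; have: B1 \in subcube B2 C2 by rewrite -E mem_subcube subxx subsetUl.
  have: B1 :|: C1 \in subcube B2 C2 by rewrite -E mem_subcube subsetUl subxx.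
  by rewrite !mem_subcube => /andP[_ ->] /andP[-> _].
have top_minus_bottom B1 C1 : [disjoint B1 & C1] -> C1 = (B1 :|: C1) :\: B1.
  by move=> d; rewrite setDUl setDv set0U; apply/esym/setDidPl; rewrite disjoint_sym.
move=> dBC dBC' E; have /andP[B'B BC] := bounds _ _ _ _ E.
have /andP[BB' BC'] := bounds _ _ _ _ (esym E).
have EB : B = B' by apply/eqP; rewrite eqEsubset BB' B'B.
have EBC : B :|: C = B' :|: C' by apply/eqP; rewrite eqEsubset BC BC'.
by rewrite (top_minus_bottom B C) // (top_minus_bottom B' C') // EBC EB.
Qed.

(* [induced_Qk n] is [induced_cube (filters n)]. *)
Definition induced_cube Fam k (S : {set {set T}}) :=
  (S \subset Fam) &&
  [exists f : {ffun {set 'I_k} -> {set T}},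
     [&& injectiveb f, [set f u | u : {set 'I_k}] == S &
         [forall u, forall v, adj (f u) (f v) == adj u v]]].

Definition cube_pairs Fam k :=
  [set p : {set T} * {set T} |
     [&& [disjoint p.1 & p.2], subcube p.1 p.2 \subset Fam & #|p.2| == k]].

Lemma card_sets k : #|{set 'I_k}| = 2 ^ k.
Proof. by rewrite -cardsT -powersetT card_powerset cardsT card_ord. Qed.

Lemma induced_cube_subcube Fam k S : induced_cube Fam k S ->
  exists2 p, p \in cube_pairs Fam k & S = subcube p.1 p.2.
Proof.
case/andP=> SF /existsP[f /and3P[/injectiveP f_inj /eqP fS /forallP f_adj]].
have [c c_inj fE] : exists2 c : 'I_k -> T, injective c &
    forall u, f u = symdiff (f set0) (c @: u).
  by apply: cube_embedding => // u v; have /forallP/(_ v)/eqP-> := f_adj u.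
set A := f set0; set C := c @: [set: 'I_k].
have dAC : [disjoint A :\: C & C] by rewrite disjoints_subset setDE subsetIr.
have cardC : #|C| = k by rewrite card_imset // cardsT card_ord.
have cuC (u : {set 'I_k}) : c @: u \subset C by apply: imsetS; exact: subsetT.
have ES : S = subcube (A :\: C) C.
  apply/eqP; rewrite eqEcard card_subcube // cardC -fS card_imset // card_sets leqnn andbT.
  apply/subsetP=> _ /imsetP[u _ ->]; rewrite fE -/A mem_subcube.
  apply/andP; split; apply/subsetP=> x; rewrite in_symdiff !inE.
    by case/andP=> xC ->; rewrite (contraNF (subsetP (cuC u) x)).
  by case xC: (x \in C); rewrite ?orbT // (contraFF (subsetP (cuC u) x) xC) addbF orbF.
by exists (A :\: C, C); rewrite // inE -ES SF dAC cardC eqxx.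
Qed.

Lemma subcube_induced Fam B C : [disjoint B & C] -> subcube B C \subset Fam ->
  induced_cube Fam #|C| (subcube B C).
Proof.
move=> dBC sF; rewrite /induced_cube sF; apply/existsP.
pose e : 'I_#|C| -> T := enum_val.
have e_inj : injective e := @enum_val_inj _ _.
have eC (u : {set 'I_#|C|}) : e @: u \subset C.
  by apply/subsetP=> _ /imsetP[i _ ->]; exact: enum_valP.
pose f := [ffun u : {set 'I_#|C|} => B :|: e @: u].
have f_inj : injective f.
  move=> u v; rewrite !ffunE => E; apply: (imset_inj e_inj).
  by rewrite -(setUKI_disjoint dBC (eC u)) E setUKI_disjoint.
exists f; apply/and3P; split; first exact/injectiveP.
  rewrite eqEcard card_subcube // card_imset // card_sets leqnn andbT.
  by apply/subsetP=> _ /imsetP[u _ ->]; rewrite ffunE mem_subcube subsetUl setUS.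
apply/forallP=> u; apply/forallP=> v; rewrite !ffunE !adjE symdiffUl ?symdiff_imset //.
  by rewrite card_imset.
all: exact: disjointWr (eC _) dBC.
Qed.

Lemma card_induced_cubes Fam k :
  #|[set S | induced_cube Fam k S]| = #|cube_pairs Fam k|.
Proof.
rewrite -(card_in_imset (f := fun p => subcube p.1 p.2)); last first.
  move=> [B C] [B' C']; rewrite !inE => /and3P[dBC _ _] /and3P[dBC' _ _].
  exact: subcube_inj.
apply: eq_card => S; rewrite inE; apply/idP/imsetP => [/induced_cube_subcube //|].
by case=> -[B C]; rewrite inE => /and3P[dBC sF /eqP <-] ->; exact: subcube_induced.
Qed.

Lemma subcube_closed (r : rel T) : irreflexive r -> forall B C,
  (subcube B C \subset
     [set X : {set T} | [forall i, forall j, r i j ==> (i \in X) ==> (j \in X)]])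
  = [forall i, forall j, r i j ==> (i \in B :|: C) ==> (j \in B)].
Proof.
move=> r_irr B C; apply/subsetP/forallP => [sub i|closedBC X].
  apply/forallP=> j; apply/implyP=> rij; apply/implyP=> iBC.
  have: i |: B \in subcube B C by rewrite mem_subcube subsetUr subUset sub1set iBC subsetUl.
  move/sub; rewrite inE => /forallP/(_ i)/forallP/(_ j); rewrite rij setU11 in_setU1.
  by case: eqVneq rij => [->|]; rewrite ?r_irr.
rewrite mem_subcube inE => /andP[BX XBC]; apply/forallP=> i; apply/forallP=> j.
apply/implyP=> rij; apply/implyP=> /(subsetP XBC) iBC; apply: (subsetP BX).
by have /forallP/(_ j) := closedBC i; rewrite rij iBC.
Qed.

End Subcubes.

(* Position p stands for x_(p+1); [descent p] means x_(p+2) < x_(p+1). *)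
Definition descent p := (p == 0) || odd p.

Lemma xi_covE n (i j : 'I_n) :
  xi_cov i j = ((i == j.+1 :> nat) && descent j) || ((j == i.+1 :> nat) && ~~ descent i).
Proof. by case: i j => [i hi] [j hj]; rewrite /xi_cov /descent /=; lia. Qed.

Lemma xi_cov_irr n : irreflexive (@xi_cov n).
Proof. by move=> i; rewrite xi_covE; lia. Qed.

Lemma filtersE n :
  filters n =
  [set X : {set 'I_n} | [forall i, forall j, xi_cov i j ==> (i \in X) ==> (j \in X)]].
Proof.
apply/setP=> X; rewrite !inE; apply/forallP/forallP => up i; apply/forallP=> j.
  apply/implyP=> cij; apply/implyP=> iX.
  by move: (forallP (up i) j); rewrite iX /xi_le connect1.
apply/implyP=> /andP[iX /connectP[p + ->]]; elim: p i iX => //= a p IH i iX /andP[ia].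
by apply: IH; exact: (implyP (implyP (forallP (up i) a) ia) iX).
Qed.

(* Labels x, y at positions p, p+1: the lower of the two may be nonzero only
   if the upper one is 2. *)
Definition compat p x y :=
  if descent p then (y != 0) ==> (x == 2) else (x != 0) ==> (y == 2).

Definition valid (s : seq nat) :=
  all (fun p => compat p (nth 0 s p) (nth 0 s p.+1)) (iota 0 (size s).-1).

Section Labels.
Variable n : nat.
Implicit Types (B C : {set 'I_n}) (s : seq nat).

Definition label B C i := if i \in B then 2 else if i \in C then 1 else 0.

Definition labels B C := [seq label B C i | i <- enum 'I_n].

Definition label_set s x := [set i : 'I_n | nth 0 s i == x].

Lemma size_labels B C : size (labels B C) = n.
Proof. by rewrite size_map size_enum_ord. Qed.

Lemma nth_labels B C (i : 'I_n) : nth 0 (labels B C) i = label B C i.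
Proof. by rewrite (nth_map i) ?size_enum_ord // nth_ord_enum. Qed.

Lemma all_labels B C : all (fun x => x < 3) (labels B C).
Proof.
by apply/allP=> _ /mapP[i _ ->]; rewrite /label; case: (i \in B); case: (i \in C).
Qed.

Lemma count_labels B C : [disjoint B & C] -> count_mem 1 (labels B C) = #|C|.
Proof.
move=> dBC; rewrite count_map cardE size_filter enumT; apply: eq_count => i.
rewrite /preim /= /label; case iB: (i \in B); rewrite ?(disjointFr dBC iB) //.
by case: (i \in C).
Qed.

Lemma labelsK B C : [disjoint B & C] ->
  (label_set (labels B C) 2, label_set (labels B C) 1) = (B, C).
Proof.
move=> dBC; congr pair; apply/setP=> i; rewrite inE nth_labels /label;
  case iB: (i \in B); rewrite ?(disjointFr dBC iB) //; by case: (i \in C).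
Qed.

Lemma label_setK s : size s = n -> all (fun x => x < 3) s ->
  labels (label_set s 2) (label_set s 1) = s.
Proof.
move=> sz s3; apply: (@eq_from_nth _ 0); rewrite size_labels // => p pn.
rewrite -[p]/(val (Ordinal pn)) nth_labels /label !inE.
have ps : p < size s by rewrite sz.
by have := allP s3 _ (mem_nth 0 ps); case: (nth 0 s p) => [|[|[|]]].
Qed.

Lemma closed_labels B C :
  [forall i, forall j, xi_cov i j ==> (i \in B :|: C) ==> (j \in B)] = valid (labels B C).
Proof.
have lab0 i : (label B C i != 0) = (i \in B :|: C).
  by rewrite /label inE; case: (i \in B); case: (i \in C).
have lab2 i : (label B C i == 2) = (i \in B).
  by rewrite /label; case: (i \in B); case: (i \in C).
apply/forallP/allP => [cl p|vl i].
  rewrite mem_iota size_labels add0n => hp; have hp1 : p.+1 < n by lia.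
  pose i := Ordinal (ltnW hp1); pose j := Ordinal hp1.
  rewrite (nth_labels B C i) (nth_labels B C j) /compat !lab0 !lab2.
  case: ifP => D; [move: (forallP (cl j) i) | move: (forallP (cl i) j)];
    by rewrite xi_covE /= D eqxx ?orbT.
apply/forallP=> j; apply/implyP; rewrite xi_covE => /orP[] /andP[/eqP E D].
  have: (j : nat) \in iota 0 (size (labels B C)).-1.
    by rewrite mem_iota size_labels; have := ltn_ord i; lia.
  by move/vl; rewrite /compat D -E !nth_labels lab0 lab2.
have: (i : nat) \in iota 0 (size (labels B C)).-1.
  by rewrite mem_iota size_labels; have := ltn_ord j; lia.
by move/vl; rewrite /compat (negbTE D) -E !nth_labels lab0 lab2.
Qed.

End Labels.

Fixpoint words3 m : seq (seq nat) :=
  if m is m'.+1 then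
    [seq rcons s 0 | s <- words3 m'] ++ [seq rcons s 1 | s <- words3 m']
      ++ [seq rcons s 2 | s <- words3 m']
  else [:: [::]].

Lemma mem_map_rcons (L : seq (seq nat)) t x y :
  (rcons t x \in [seq rcons s y | s <- L]) = (x == y) && (t \in L).
Proof.
apply/mapP/andP => [[s sL /rcons_inj[-> ->]]|[/eqP-> tL]]; last by exists t.
by rewrite eqxx.
Qed.

Lemma mem_words3 m s : (s \in words3 m) = (size s == m) && all (fun x => x < 3) s.
Proof.
elim: m s => [|m IH] s; first by case: s.
case/lastP: s => [|t x] /=.
  by rewrite !mem_cat; apply/negbTE; rewrite !negb_or;
    apply/and3P; split; apply/mapP => -[s _] /esym/eqP; rewrite -size_eq0 size_rcons.
rewrite !mem_cat !mem_map_rcons IH size_rcons eqSS all_rcons.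
by case: x => [|[|[|x]]]; rewrite /= ?andbF ?andbT ?orbF // andbC.
Qed.

Lemma words3_uniq m : uniq (words3 m).
Proof.
elim: m => //= m IH.
have U y : uniq [seq rcons s y | s <- words3 m] by rewrite map_inj_uniq //; exact: rcons_injl.
rewrite !cat_uniq !U /= andbT; apply/andP; split.
  by apply/hasPn=> s; rewrite mem_cat => /orP[] /mapP[t _ ->]; rewrite mem_map_rcons.
by apply/hasPn=> s /mapP[t _ ->]; rewrite mem_map_rcons.
Qed.

Definition nvalid m k := count (fun s => valid s && (count_mem 1 s == k)) (words3 m).

Lemma card_cube_pairs n k : #|cube_pairs (filters n) k| = nvalid n k.
Proof.
rewrite cardE -(size_map (fun p => labels p.1 p.2)) /nvalid -size_filter.
apply/perm_size/uniq_perm.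
- rewrite map_inj_in_uniq ?enum_uniq // => -[B C] [B' C'].
  rewrite !mem_enum !inE => /and3P[dBC _ _] /and3P[dBC' _ _] /= E.
  by rewrite -(labelsK dBC) E labelsK.
- by rewrite filter_uniq // words3_uniq.
move=> s; rewrite mem_filter mem_words3; apply/mapP/idP => [[[B C]]|].
  rewrite mem_enum inE /= filtersE (subcube_closed (@xi_cov_irr n)).
  case/and3P=> dBC; rewrite (closed_labels B C) => vl /eqP <- ->.
  by rewrite vl count_labels // eqxx size_labels eqxx all_labels.
case/and3P=> /andP[vl /eqP <-] /eqP sz s3.
set B := label_set n s 2; set C := label_set n s 1.
have dBC : [disjoint B & C].
  by rewrite -setI_eq0; apply/eqP/setP=> i; rewrite !inE; case: (nth 0 s i) => [|[|[|]]].
exists (B, C); last by rewrite label_setK.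
rewrite mem_enum inE /= filtersE (subcube_closed (@xi_cov_irr n)).
apply/and3P; split => //; first by rewrite (closed_labels B C) label_setK.
by rewrite -(count_labels dBC) label_setK.
Qed.

Lemma valid_rcons t y : 0 < size t ->
  valid (rcons t y) = valid t && compat (size t).-1 (last 0 t) y.
Proof.
move=> t0; rewrite /valid size_rcons /= -{1}(prednK t0) -addn1 iotaD all_cat /= andbT add0n.
congr andb; last by rewrite !nth_rcons (prednK t0) ltnn eqxx leqnn nth_last.
apply: eq_in_all => p; rewrite mem_iota add0n => /andP[_ hp].
have h1 : p < size t by exact: leq_trans hp (leq_pred _).
have h2 : p.+1 < size t by rewrite -(prednK t0) ltnS.
by rewrite !nth_rcons h1 h2.
Qed.

Lemma count_rcons1 s x : count_mem 1 (rcons s x) = count_mem 1 s + (x == 1).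
Proof. by rewrite -cats1 count_cat /= addn0 eq_sym. Qed.

Lemma count_andl (T : Type) (b : bool) (a : pred T) s :
  count (fun x => b && a x) s = b * count a s.
Proof. by case: b; rewrite ?mul1n //; elim: s. Qed.

(* Valid words of length m+1 (not m) ending with y. *)
Definition nvalid_end m y k :=
  count (fun s => valid (rcons s y) && (count_mem 1 (rcons s y) == k)) (words3 m).

Lemma nvalid_split m k :
  nvalid m.+1 k = nvalid_end m 0 k + nvalid_end m 1 k + nvalid_end m 2 k.
Proof. by rewrite /nvalid /= !count_cat !count_map addnA. Qed.

Lemma nvalid_endS m y k :
  nvalid_end m.+1 y (k + (y == 1)) = compat m 0 y * nvalid_end m 0 k
    + compat m 1 y * nvalid_end m 1 k + compat m 2 y * nvalid_end m 2 k.
Proof.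
rewrite /nvalid_end /= !count_cat !count_map addnA -!count_andl.
congr (_ + _ + _); apply: eq_in_count => s; rewrite mem_words3 => /andP[/eqP sz _] /=.
all: by rewrite valid_rcons size_rcons ?sz // last_rcons !count_rcons1 eqn_add2r andbAC andbC.
Qed.

Lemma nvalid_end_1_0 m : nvalid_end m 1 0 = 0.
Proof.
by rewrite /nvalid_end; elim: (words3 m) => //= s L ->; rewrite count_rcons1 eqxx addn1 andbF.
Qed.

Lemma nvalid_end_descent m : descent m ->
  [/\ forall k, nvalid_end m.+1 0 k = nvalid m.+1 k,
      forall k, nvalid_end m.+1 1 k = if k is k'.+1 then nvalid_end m 2 k' else 0
    & forall k, nvalid_end m.+1 2 k = nvalid_end m 2 k].
Proof.
move=> D; split=> [k|[|k]|k]; rewrite ?nvalid_end_1_0 // ?nvalid_split.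
- by move: (nvalid_endS m 0 k); rewrite /compat D /= addn0 !mul1n => ->.
- by move: (nvalid_endS m 1 k); rewrite /compat D /= addn1 !mul0n mul1n !add0n => ->.
- by move: (nvalid_endS m 2 k); rewrite /compat D /= addn0 !mul0n mul1n !add0n => ->.
Qed.

Lemma nvalid_end_ascent m : ~~ descent m ->
  [/\ forall k, nvalid_end m.+1 0 k = nvalid_end m 0 k,
      forall k, nvalid_end m.+1 1 k = if k is k'.+1 then nvalid_end m 0 k' else 0
    & forall k, nvalid_end m.+1 2 k = nvalid m.+1 k].
Proof.
move=> /negbTE D; split=> [k|[|k]|k]; rewrite ?nvalid_end_1_0 // ?nvalid_split.
- by move: (nvalid_endS m 0 k); rewrite /compat D /= addn0 mul1n !mul0n !addn0 => ->.
- by move: (nvalid_endS m 1 k); rewrite /compat D /= addn1 mul1n !mul0n !addn0 => ->.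
- by move: (nvalid_endS m 2 k); rewrite /compat D /= addn0 !mul1n => ->.
Qed.

Lemma nvalid_rec m k : 2 <= m ->
  nvalid m.+2 k = nvalid m.+1 k + nvalid m k + (if k is k'.+1 then nvalid m k' else 0).
Proof.
case: m => [|[|m]] // _; rewrite nvalid_split.
have alt : descent m.+2 = ~~ descent m.+1 by [].
have [D|D] := boolP (descent m.+2).
  have [E0 E1 E2] := nvalid_end_descent D.
  have D' : ~~ descent m.+1 by rewrite -alt.
  have [_ _ F2] := nvalid_end_ascent D'.
  by rewrite E0 E1 E2; case: k => [|k]; rewrite ?F2; lia.
have [E0 E1 E2] := nvalid_end_ascent D.
have D' : descent m.+1 by move: D; rewrite alt negbK.
have [F0 _ _] := nvalid_end_descent D'.
by rewrite E0 E1 E2; case: k => [|k]; rewrite ?F0; lia.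
Qed.

Lemma nat_ind2 (P : nat -> Prop) n0 : P n0 -> P n0.+1 ->
  (forall n, n0 <= n -> P n -> P n.+1 -> P n.+2) -> forall n, n0 <= n -> P n.
Proof.
move=> P0 P1 PS; suff H m : P (n0 + m) /\ P (n0 + m).+1.
  by move=> n /subnKC <-; case: (H (n - n0)).
elim: m => [|m [Pm Pm1]]; rewrite ?addn0 // addnS; split=> //.
by apply: PS => //; exact: leq_addr.
Qed.

Lemma lucas_fib n : lucas n.+1 = fib n + fib n.+2.
Proof.
elim/ltn_ind: n => -[|[|n]] // IH.
by transitivity (lucas n.+2 + lucas n.+1) => //; rewrite !IH //=; lia.
Qed.

Lemma nvalid0 n : 2 <= n -> nvalid n 0 = lucas n.
Proof.
move: n; apply: nat_ind2 => [||n n2 IH0 IH1]; try by vm_compute.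
by rewrite nvalid_rec // IH0 IH1 addn0.
Qed.

Lemma nvalid1 n : 2 <= n -> nvalid n 1 = n * fib n.-1.
Proof.
move: n; apply: nat_ind2 => [||[|n] n2 IH0 IH1]; try by vm_compute.
by rewrite nvalid_rec // IH0 IH1 nvalid0 // lucas_fib /=; nia.
Qed.

Local Open Scope ring_scope.

Definition q2_formula (n : nat) : rat :=
  1 / 5 * n%:R * (fib (n - 3))%:R + 1 / 10 * (n%:R - 3) * n%:R * (lucas (n - 2))%:R.

Definition q3_formula (n : nat) : rat :=
  2 / 25 * n%:R * (fib (n - 5))%:R
  + 1 / 25 * (n%:R - 5) * n%:R * (lucas (n - 4))%:R
  + 1 / 30 * (n%:R ^+ 2 - 9 * n%:R + 20) * n%:R * (fib (n - 3))%:R.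

Lemma q2_formula_rec n : (4 <= n)%N ->
  q2_formula n.+2 = q2_formula n.+1 + q2_formula n + (n * fib n.-1)%:R.
Proof.
case: n => [|[|[|[|n]]]] // _; rewrite /q2_formula !subSS !subn0 !lucas_fib /=.
by rewrite !natrD !natrM; field.
Qed.

Lemma q3_formula_rec n : (6 <= n)%N ->
  q3_formula n.+2 = q3_formula n.+1 + q3_formula n + q2_formula n.
Proof.
case: n => [|[|[|[|[|[|n]]]]]] // _.
rewrite /q3_formula /q2_formula !subSS !subn0 !lucas_fib /=.
by rewrite !natrD; field.
Qed.

Lemma nvalid2 n : (4 <= n)%N -> (nvalid n 2)%:R = q2_formula n.
Proof.
move: n; apply: nat_ind2 => [||n n4 IH0 IH1].
- have -> : nvalid 4 2 = 2%N by vm_compute.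
  by rewrite /q2_formula /=; field.
- have -> : nvalid 5 2 = 5%N by vm_compute.
  by rewrite /q2_formula /=; field.
- have n2 : (2 <= n)%N by exact: leq_trans n4.
  by rewrite nvalid_rec // !natrD IH0 IH1 nvalid1 // q2_formula_rec.
Qed.

Lemma nvalid3 n : (6 <= n)%N -> (nvalid n 3)%:R = q3_formula n.
Proof.
move: n; apply: nat_ind2 => [||n n6 IH0 IH1].
- have -> : nvalid 6 3 = 2%N by vm_compute.
  by rewrite /q3_formula /=; field.
- have -> : nvalid 7 3 = 7%N by vm_compute.
  by rewrite /q3_formula /=; field.
- have n2 : (2 <= n)%N by exact: leq_trans n6.
  have n4 : (4 <= n)%N by exact: leq_trans n6.
  by rewrite nvalid_rec // !natrD IH0 IH1 nvalid2 // q3_formula_rec.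
Qed.

Theorem mainTheorem7 :
  (forall n : nat, (2 <= n)%N ->
      q n 0 = lucas n /\ q n 1 = (n * fib n.-1)%N) /\
  (forall n : nat, (4 <= n)%N ->
      (q n 2)%:R = 1 / 5 * n%:R * (fib (n - 3))%:R
                   + 1 / 10 * (n%:R - 3) * n%:R * (lucas (n - 2))%:R :> rat) /\
  (forall n : nat, (6 <= n)%N ->
      (q n 3)%:R = 2 / 25 * n%:R * (fib (n - 5))%:R
                   + 1 / 25 * (n%:R - 5) * n%:R * (lucas (n - 4))%:R
                   + 1 / 30 * (n%:R ^+ 2 - 9 * n%:R + 20) * n%:R * (fib (n - 3))%:R
                   :> rat).
Proof.
have qE n k : q n k = nvalid n k by rewrite /q card_induced_cubes card_cube_pairs.
split; [|split] => n hn; rewrite !qE.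
- by rewrite nvalid0 ?nvalid1.
- exact: nvalid2.
- exact: nvalid3.
Qed.
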